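(* Let $\{\Theta_n\}_{n\ge0}$ be an insertional family of lattice congruences, $\Theta_n$ a congruence on the weak order on $S_n$. Then the injective linear map $c:\mathbb{K}[Z^\Theta_\infty]\to\mathbb{K}[S_\infty]$ satisfies $(c\otimes c)\circ\Delta_Z=\Delta_S\circ c$, so $c$ embeds $(\mathbb{K}[Z^\Theta_\infty],\Delta_Z)$ as a subcoalgebra of $(\mathbb{K}[S_\infty],\Delta_S)$.
   Context: $S_n$ is the set of permutations of $[n]$ in one-line notation $x=x_1\cdots x_n$ with the (right) weak order ($x\le y$ iff the set of inverted value pairs of $x$ is contained in that of $y$), a lattice. The standardization $\mathrm{st}(a_1,\dots,a_k)$ of a sequence of distinct integers is the $u\in S_k$ with $u_i<u_j\iff a_i<a_j$ ($\mathrm{st}$ of the empty sequence is the empty permutation in $S_0$). For a congruence $\Theta_n$ on $S_n$, $\pi_\downarrow x$ is the minimum of the class of $x$. Insertional: for all $p,q\ge0$ and every $p$-element subset $Q\subseteq[p+q]$, let $\varphi_Q:S_p\times S_q\to S_{p+q}$ send $(u,v)$ to the unique $x$ with $\{x_1,\dots,x_p\}=Q$, $\mathrm{st}(x_1,\dots,x_p)=u$, $\mathrm{st}(x_{p+1},\dots,x_{p+q})=v$; the family is insertional if whenever $u\equiv u'\pmod{\Theta_p}$ and $v\equiv v'\pmod{\Theta_q}$, then $\varphi_Q(u,v)\equiv\varphi_Q(u',v')\pmod{\Theta_{p+q}}$. $\mathbb{K}$ is a field; $\mathbb{K}[S_\infty]=\bigoplus_n\mathbb{K}[S_n]$ with Malvenuto–Reutenauer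 coproduct $\Delta_S(x)=\sum_{p=0}^n\mathrm{st}(x_1,\dots,x_p)\otimes\mathrm{st}(x_{p+1},\dots,x_n)$. Let $Z_n=\{x\in S_n:\pi_\downarrow x=x\}$, $\mathbb{K}[Z^\Theta_\infty]=\bigoplus_n\mathbb{K}[Z_n]$. The map $c$ sends $x\in Z_n$ to the sum of the elements of its $\Theta_n$-class; $r:\mathbb{K}[S_\infty]\to\mathbb{K}[Z^\Theta_\infty]$ is the linear map fixing $x$ if $\pi_\downarrow x=x$ and sending $x$ to $0$ otherwise. The coproduct on $\mathbb{K}[Z^\Theta_\infty]$ is $\Delta_Z=(r\otimes r)\circ\Delta_S\circ c$. *)

From HB Require Import structures.
From mathcomp Require Import all_boot all_order all_fingroup all_algebra.
Set Implicit Arguments. Unset Strict Implicit. Unset Printing Implicit Defensive.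
Import GRing.Theory.
Local Open Scope ring_scope.

(* Permutations of [n] are 'S_n = {perm 'I_n}, values 0..n-1 (shifted by one
   from the paper's 1..n; harmless since only relative order matters). *)

Definition oneline n (x : 'S_n) : seq nat := [seq val (x i) | i <- enum 'I_n].

Definition st (s : seq nat) : seq nat :=
  [seq count (fun b => (b < a)%N) s | a <- s].

Definition inv_set n (x : 'S_n) : {set 'I_n * 'I_n} :=
  [set ab : 'I_n * 'I_n | (ab.1 < ab.2)%N && ((x^-1)%g ab.2 < (x^-1)%g ab.1)%N].

Definition weak_le n (x y : 'S_n) : bool := inv_set x \subset inv_set y.

Definition is_meet n (x y m : 'S_n) : Prop :=
  weak_le m x /\ weak_le m y /\ forall z, weak_le z x -> weak_le z y -> weak_le z m.
Definition is_join n (x y m : 'S_n) : Prop :=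
  weak_le x m /\ weak_le y m /\ forall z, weak_le x z -> weak_le y z -> weak_le m z.

Definition lattice_congruence n (th : rel 'S_n) : Prop :=
  equivalence_rel th /\
  (forall x y z m m', th x y -> is_meet x z m -> is_meet y z m' -> th m m') /\
  (forall x y z m m', th x y -> is_join x z m -> is_join y z m' -> th m m').

Definition is_phiQ p q (Q : {set 'I_(p + q)}) (u : 'S_p) (v : 'S_q)
    (x : 'S_(p + q)) : Prop :=
  [set x i | i : 'I_(p + q) & (i < p)%N] = Q /\
  st (take p (oneline x)) = oneline u /\
  st (drop p (oneline x)) = oneline v.

Definition insertional (th : forall n, rel 'S_n) : Prop :=
  forall p q (Q : {set 'I_(p + q)}) (u u' : 'S_p) (v v' : 'S_q) (x x' : 'S_(p + q)),
    #|Q| = p -> th p u u' -> th q v v' ->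
    is_phiQ Q u v x -> is_phiQ Q u' v' x' -> th (p + q) x x'.

Section Coalg.
Variables (K : fieldType) (th : forall n, rel 'S_n).

Definition isZ n (x : 'S_n) : bool := [forall y, th y x ==> weak_le x y].

(* degree-n component of K[S_oo]: {ffun 'S_n -> K} (coefficients);
   K[Z_n] = those supported on Z_n;
   component K[S_p] (x) K[S_q] of the tensor square: {ffun 'S_p * 'S_q -> K}. *)

Definition DeltaS n (f : {ffun 'S_n -> K}) p q : {ffun 'S_p * 'S_q -> K} :=
  [ffun uv => if (p + q == n)%N then
     \sum_(y : 'S_n | (st (take p (oneline y)) == oneline uv.1)
                      && (st (drop p (oneline y)) == oneline uv.2)) f y
   else 0].

(* c : sends x in Z_n to the sum of its class, extended linearly *)
Definition cmap n (f : {ffun 'S_n -> K}) : {ffun 'S_n -> K} :=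
  [ffun y => \sum_(x : 'S_n | isZ x && th x y) f x].

Definition rmap n (f : {ffun 'S_n -> K}) : {ffun 'S_n -> K} :=
  [ffun x => if isZ x then f x else 0].

Definition ctens p q (g : {ffun 'S_p * 'S_q -> K}) : {ffun 'S_p * 'S_q -> K} :=
  [ffun uv => \sum_(u' : 'S_p | isZ u' && th u' uv.1)
               \sum_(v' : 'S_q | isZ v' && th v' uv.2) g (u', v')].

Definition rtens p q (g : {ffun 'S_p * 'S_q -> K}) : {ffun 'S_p * 'S_q -> K} :=
  [ffun uv => if isZ uv.1 && isZ uv.2 then g uv else 0].

Definition DeltaZ n (f : {ffun 'S_n -> K}) p q : {ffun 'S_p * 'S_q -> K} :=
  rtens (DeltaS (cmap f) p q).

End Coalg.

From HB Require Import structures.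
From mathcomp Require Import all_boot all_order all_fingroup all_algebra.
From mathcomp Require Import zify.
Set Implicit Arguments. Unset Strict Implicit. Unset Printing Implicit Defensive.

(* Every Theta-class has a least element for the weak order, so c sends x in Z
   to x plus non-minimal permutations (hence c is injective) and the double sum
   defining c (x) c collapses onto the class minima. The least element is an
   element m of fewest inversions: for y in the class, m /\ y is congruent to
   y /\ y = y, which forces m /\ y = m. Meets exist because if a common lower
   bound m of x and y with the most inversions were not above another common
   lower bound z, some adjacent ascent of m would be inverted in both x and y,
   and swapping it would give a larger common lower bound.
   It remains that Delta_S (c f) (u, v) depends only on the classes of u and v:
   permuting positions inside the two blocks maps the fibre of (u, v) onto that
   of (u', v') and fixes the set Q of values in the first block, so by
   insertionality each y is congruent to its image, and c f is constant on
   classes. *)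

Lemma count_enum_card (T : finType) (P : pred T) : count P (enum T) = #|[set x | P x]|.
Proof. by rewrite cardsE cardE -size_filter /enum_mem filter_predT -enumT. Qed.

Lemma card_ord_lt n t : t <= n -> #|[set k : 'I_n | k < t]| = t.
Proof.
move=> le_tn; rewrite -count_enum_card -(count_map val (fun k => k < t)) val_enum_ord.
by rewrite -size_filter (filter_iota_ltn 0 le_tn) size_iota.
Qed.

Lemma card_perm_lt n (x : 'S_n) a : #|[set c | x c < x a]| = x a.
Proof.
have -> : [set c | x c < x a] = x @^-1: [set k : 'I_n | k < x a].
  by apply/setP => c; rewrite !inE.
by rewrite card_preimset ?card_ord_lt //; [apply: ltnW | apply: perm_inj].
Qed.

Lemma size_oneline n (y : 'S_n) : size (oneline y) = n.
Proof. by rewrite /oneline size_map size_enum_ord. Qed.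

Lemma nth_oneline n (y : 'S_n) (k : 'I_n) : nth 0 (oneline y) k = y k.
Proof. by rewrite /oneline (nth_map k) ?size_enum_ord // nth_ord_enum. Qed.

Lemma take_oneline p q (y : 'S_(p + q)) :
  take p (oneline y) = [seq val (y (lshift q i)) | i <- enum 'I_p].
Proof.
apply: (@eq_from_nth _ 0) => [|k].
  by rewrite size_map size_enum_ord size_takel // size_oneline leq_addr.
rewrite size_takel ?size_oneline ?leq_addr // => lt_kp.
have -> : k = Ordinal lt_kp by [].
rewrite nth_take // (nth_map (Ordinal lt_kp)) ?size_enum_ord // nth_ord_enum.
exact: (nth_oneline y (lshift q (Ordinal lt_kp))).
Qed.

Lemma drop_oneline p q (y : 'S_(p + q)) :
  drop p (oneline y) = [seq val (y (rshift p j)) | j <- enum 'I_q].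
Proof.
apply: (@eq_from_nth _ 0) => [|k].
  by rewrite size_map size_enum_ord size_drop size_oneline addKn.
rewrite size_drop size_oneline addKn => lt_kq.
have -> : k = Ordinal lt_kq by [].
rewrite nth_drop (nth_map (Ordinal lt_kq)) ?size_enum_ord // nth_ord_enum.
exact: (nth_oneline y (rshift p (Ordinal lt_kq))).
Qed.

Definition has_pattern p (g : 'I_p -> nat) (u : 'S_p) : bool :=
  [forall i, forall j, (g i < g j) == (u i < u j)].

Lemma has_patternP p (g : 'I_p -> nat) (u : 'S_p) :
  reflect (forall i j, (g i < g j) = (u i < u j)) (has_pattern g u).
Proof.
apply: (iffP forallP) => [pat i j | pat i].
  by have /forallP/(_ j)/eqP := pat i.
by apply/forallP => j; rewrite pat.
Qed.

Lemma st_map_eq p (g : 'I_p -> nat) (u : 'S_p) :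
  (st [seq g i | i <- enum 'I_p] == oneline u) = has_pattern g u.
Proof.
have rank_st (k : 'I_p) :
    nth 0 (st [seq g i | i <- enum 'I_p]) k = #|[set j | g j < g k]|.
  rewrite (nth_map 0); last by rewrite size_map size_enum_ord.
  by rewrite count_map (nth_map k) ?size_enum_ord // nth_ord_enum count_enum_card.
apply/eqP/has_patternP => [st_u i j | pat_gu].
  have rank_u k : nat_of_ord (u k) = #|[set j | g j < g k]|.
    by rewrite -nth_oneline -st_u rank_st.
  rewrite !rank_u; case: (ltnP (g i) (g j)) => g_ij.
  - apply/esym/proper_card/properP; split.
      by apply/subsetP => k; rewrite !inE => /ltn_trans; apply.
    by exists i; rewrite !inE // ltnn.
  - apply/esym/negbTE; rewrite -leqNgt; apply: subset_leq_card.
    by apply/subsetP => k; rewrite !inE => /leq_trans; apply.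
have size_st : size (st [seq g i | i <- enum 'I_p]) = p.
  by rewrite size_map size_map size_enum_ord.
apply: (@eq_from_nth _ 0) => [|k]; first by rewrite size_oneline.
rewrite size_st => lt_kp; have -> : k = Ordinal lt_kp by [].
rewrite rank_st nth_oneline -card_perm_lt.
by apply: eq_card => j; rewrite !inE pat_gu.
Qed.

Lemma has_pattern_perm p (g g' : 'I_p -> nat) (w u : 'S_p) :
  (forall i, g' i = g (w i)) -> has_pattern g' (w * u)%g = has_pattern g u.
Proof.
move=> g'E; apply/has_patternP/has_patternP => pat i j.
  by rewrite -(permKV w i) -(permKV w j) -!g'E pat !permM.
by rewrite !g'E pat !permM.
Qed.

Lemma inv_setE n (x : 'S_n) a b :
  ((a, b) \in inv_set x) = (a < b) && ((x^-1)%g b < (x^-1)%g a).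
Proof. by rewrite inE. Qed.

Lemma perm_ltn_inv_set n (x : 'S_n) (a c : 'I_n) :
  ((x^-1)%g c < (x^-1)%g a) =
  if c < a then (c, a) \notin inv_set x else (a, c) \in inv_set x.
Proof.
have ne_x (d e : 'I_n) : d != e -> nat_of_ord ((x^-1)%g d) != (x^-1)%g e.
  by apply: contra => /eqP/val_inj/perm_inj ->.
rewrite !inv_setE; case: (ltngtP c a) => [lt_ca | lt_ac | /val_inj ->] /=.
- by have := ne_x c a (negbT (ltn_eqF lt_ca)); lia.
- by [].
- by rewrite ltnn.
Qed.

Lemma inv_set_inj n : injective (@inv_set n).
Proof.
move=> x y E; apply: invg_inj; apply/permP => a; apply: val_inj.
rewrite /= -(card_perm_lt (x^-1)%g) -(card_perm_lt (y^-1)%g).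
by apply: eq_card => c; rewrite !inE !perm_ltn_inv_set E.
Qed.

Lemma weak_refl n (x : 'S_n) : weak_le x x.
Proof. exact: subxx. Qed.

Lemma weak_antisym n (x y : 'S_n) : weak_le x y -> weak_le y x -> x = y.
Proof. by move=> le_xy le_yx; apply/inv_set_inj/eqP; rewrite eqEsubset; apply/andP. Qed.

Lemma inv_set1 n : inv_set (1 : 'S_n)%g = set0.
Proof. by apply/setP => -[a b]; rewrite inv_setE inE invg1 !perm1; case: ltngtP. Qed.

Lemma inv_set_swap_ascent n (w : 'S_n) (i j : 'I_n) :
  j = i.+1 :> nat -> w i < w j -> inv_set (tperm i j * w)%g = (w i, w j) |: inv_set w.
Proof.
move=> ij_adj w_ij; apply/setP => -[a b]; rewrite !inE /=.
rewrite -(permKV w a) -(permKV w b); move: (w^-1 a)%g (w^-1 b)%g => c d.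
rewrite invMg tpermV !permM !permK xpair_eqE !(inj_eq perm_inj).
case: tpermP => [->|->|/eqP ne_ci /eqP ne_cj]; case: tpermP => [->|->|/eqP ne_di /eqP ne_dj];
  rewrite ?eqxx ?andbT ?andbF ?orbF ?orbT ?w_ij //=.
all: repeat match goal with H : is_true (_ != _) |- _ => move: H end.
all: rewrite -?(inj_eq (@ord_inj n)); lia.
Qed.

Lemma exists_gap_inversion n (z w : 'S_n) : ~~ weak_le z w ->
  exists a b : 'I_n, [/\ (a, b) \in inv_set z, (w^-1)%g a < (w^-1)%g b &
    forall k : 'I_n, (w^-1)%g a < k < (w^-1)%g b -> (w k < a) || (b < w k)].
Proof.
case/subsetPn => ab0 z_ab0 w_ab0.
pose gap (ab : 'I_n * 'I_n) := (w^-1)%g ab.2 - (w^-1)%g ab.1.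
have D_ab0 : ab0 \in inv_set z :\: inv_set w by rewrite inE z_ab0 w_ab0.
case: (arg_minnP gap D_ab0) => -[a b] /setDP[z_ab w_ab] gap_min.
have := z_ab; rewrite inv_setE => /andP[lt_ab z_ba].
have w_lt_ab : (w^-1)%g a < (w^-1)%g b by rewrite perm_ltn_inv_set lt_ab.
exists a, b; split => // k /andP[lt_ak lt_kb]; set c := w k.
have wK : (w^-1)%g c = k by rewrite permK.
have ne_ca : nat_of_ord c != a by apply: contraTneq lt_ak => /ord_inj <-; rewrite wK ltnn.
have ne_cb : nat_of_ord c != b by apply: contraTneq lt_kb => /ord_inj <-; rewrite wK ltnn.
apply/contraT; rewrite negb_or -!leqNgt => /andP[le_ac le_cb].
have [z_ca | z_ac] := ltnP ((z^-1)%g c) ((z^-1)%g a).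
- have D_ac : (a, c) \in inv_set z :\: inv_set w by rewrite !inE /= wK z_ca; lia.
  by move: (gap_min _ D_ac); rewrite /gap /= wK; lia.
- have D_cb : (c, b) \in inv_set z :\: inv_set w by rewrite !inE /= wK; lia.
  by move: (gap_min _ D_cb); rewrite /gap /= wK; lia.
Qed.

Lemma exists_ascent_between n (w : 'S_n) (a b : 'I_n) :
  a < b -> (w^-1)%g a < (w^-1)%g b ->
  (forall k : 'I_n, (w^-1)%g a < k < (w^-1)%g b -> (w k < a) || (b < w k)) ->
  exists i j : 'I_n,
    [/\ j = i.+1 :> nat, (w^-1)%g a <= i, j <= (w^-1)%g b, w i <= a & b <= w j].
Proof.
move=> lt_ab w_ab between.
pose P (k : 'I_n) := ((w^-1)%g a < k) && (b <= w k).
have P_b : P ((w^-1)%g b) by rewrite /P w_ab permKV leqnn.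
case: (arg_minnP val P_b) => j /andP[lt_aj le_bj] j_min.
have lt_in : j.-1 < n by have := ltn_ord j; lia.
pose i := Ordinal lt_in.
have le_ai : (w^-1)%g a <= i by rewrite /=; lia.
exists i, j; split => //; [by rewrite /=; lia | exact: j_min |].
have [<-|ne_ia] := eqVneq ((w^-1)%g a) i; first by rewrite permKV.
have /between : (w^-1)%g a < i < (w^-1)%g b.
  by have := j_min _ P_b; rewrite /= ltn_neqAle ne_ia le_ai /=; lia.
case/orP => [/ltnW // | lt_bi].
by have := j_min i; rewrite /P (ltnW lt_bi) ltn_neqAle ne_ia le_ai => /(_ isT) /=; lia.
Qed.

Lemma weak_le_before n (w v : 'S_n) (c a : 'I_n) :
  weak_le w v -> c <= a -> (w^-1)%g a <= (w^-1)%g c -> (v^-1)%g a <= (v^-1)%g c.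
Proof.
move=> le_wv le_ca w_ac; have [-> // | ne_ca] := eqVneq c a.
have /(subsetP le_wv) : (c, a) \in inv_set w.
  rewrite inv_setE ltn_neqAle ne_ca le_ca /=.
  by rewrite ltn_neqAle w_ac andbT (inj_eq (@ord_inj n)) (inj_eq perm_inj) eq_sym.
by rewrite inv_setE => /andP[_ /ltnW].
Qed.

Lemma exists_common_ascent n (z w : 'S_n) : ~~ weak_le z w ->
  exists i j : 'I_n, [/\ j = i.+1 :> nat, w i < w j &
    forall v, weak_le z v -> weak_le w v -> (w i, w j) \in inv_set v].
Proof.
move=> /exists_gap_inversion [a [b [z_ab w_ab between]]].
have := z_ab; rewrite inv_setE => /andP[lt_ab _].
have [i [j [ij_adj le_ai le_jb le_ia le_bj]]] := exists_ascent_between lt_ab w_ab between.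
have lt_ij : w i < w j by apply: leq_ltn_trans le_ia (leq_trans lt_ab le_bj).
exists i, j; split => // v le_zv le_wv.
have /(subsetP le_zv) := z_ab; rewrite !inv_setE lt_ij => /andP[_ v_ba] /=.
have v_ai : (v^-1)%g a <= (v^-1)%g (w i) by apply: (weak_le_before le_wv); rewrite ?permK.
have v_jb : (v^-1)%g (w j) <= (v^-1)%g b by apply: (weak_le_before le_wv); rewrite ?permK.
exact: leq_ltn_trans v_jb (leq_trans v_ba v_ai).
Qed.

Lemma weak_meet_exists n (x y : 'S_n) : exists m, is_meet x y m.
Proof.
pose lower_bound m := weak_le m x && weak_le m y.
have lb1 : lower_bound 1%g by rewrite /lower_bound /weak_le inv_set1 !sub0set.
case: (arg_maxnP (fun m => #|inv_set m|) lb1) => m /andP[le_mx le_my] m_max.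
exists m; split=> //; split=> // z le_zx le_zy; apply/contraT.
case/exists_common_ascent => i [j [ij_adj m_ij inv_ij]].
have swap_lb : lower_bound (tperm i j * m)%g.
  by rewrite /lower_bound /weak_le inv_set_swap_ascent // !subUset !sub1set !inv_ij //=; apply/andP.
have := m_max _ swap_lb; rewrite inv_set_swap_ascent // cardsU1.
by rewrite inv_setE !permK ij_adj; lia.
Qed.

Section CongruenceClasses.
Variable th : forall n, rel 'S_n.
Arguments th : clear implicits.
Hypothesis th_cong : forall n : nat, lattice_congruence (th n).

Lemma th_refl n (x : 'S_n) : th n x x.
Proof. by case: (th_cong n) => /equivalence_relP[th_refl _] _. Qed.

Lemma th_eq_class n (x y : 'S_n) : th n x y -> th n x =1 th n y.
Proof. by case: (th_cong n) => /equivalence_relP[_ th_class] _; apply: th_class. Qed.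

Lemma th_sym n (x y : 'S_n) : th n x y -> th n y x.
Proof. by move/th_eq_class => /(_ x); rewrite th_refl. Qed.

Lemma th_trans n (x y z : 'S_n) : th n x y -> th n y z -> th n x z.
Proof. by move/th_eq_class ->. Qed.

Definition class_min n (u : 'S_n) : 'S_n := [arg min_(m < u | th n m u) #|inv_set m|].

Lemma class_minP n (u : 'S_n) :
  extremum_spec leq (th n ^~ u) (fun m => #|inv_set m|) (class_min u).
Proof. exact: (@arg_minnP _ u (th n ^~ u) _ (th_refl u)). Qed.

Lemma class_min_th n (u : 'S_n) : th n (class_min u) u.
Proof. by case: class_minP. Qed.

Lemma isZ_class_min n (u : 'S_n) : isZ th (class_min u).
Proof.
case: class_minP => m th_mu m_min; apply/forallP => y; apply/implyP => th_ym.
have [w meet_wmy] := weak_meet_exists m y; have [le_wm [le_wy _]] := meet_wmy.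
have meet_yy : is_meet y y y by split; [apply: weak_refl | split; [apply: weak_refl |]].
have th_wy : th n w y.
  by case: (th_cong n) => _ [th_meet _]; apply: th_meet (th_sym th_ym) meet_wmy meet_yy.
have inv_wm : inv_set w = inv_set m.
  apply/eqP; rewrite eqEcard; apply/andP; split => //.
  by apply: m_min; apply: th_trans th_wy (th_trans th_ym th_mu).
by rewrite /weak_le -inv_wm.
Qed.

Lemma isZ_th_class_min n (u x : 'S_n) : (isZ th x && th n x u) = (x == class_min u).
Proof.
apply/andP/eqP => [[Zx th_xu] | ->]; last by rewrite isZ_class_min class_min_th.
have th_x_min : th n x (class_min u) by apply: th_trans th_xu (th_sym (class_min_th u)).
apply: weak_antisym.
  by move/forallP: Zx => /(_ (class_min u)) /implyP; apply; apply: th_sym.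
by move/forallP: (isZ_class_min u) => /(_ x) /implyP; apply.
Qed.

Lemma big_isZ_th (R : Type) (idx : R) (op : Monoid.law idx) n (u : 'S_n) (F : 'S_n -> R) :
  \big[op/idx]_(x | isZ th x && th n x u) F x = F (class_min u).
Proof. by rewrite (eq_bigl _ _ (isZ_th_class_min u)) big_pred1_eq. Qed.

Lemma class_min_id n (x : 'S_n) : isZ th x -> class_min x = x.
Proof. by move=> Zx; apply/esym/eqP; rewrite -isZ_th_class_min Zx th_refl. Qed.

Lemma cmap_isZ (K : fieldType) n (f : {ffun 'S_n -> K}) x : isZ th x -> cmap th f x = f x.
Proof. by move=> Zx; rewrite ffunE big_isZ_th class_min_id. Qed.

Lemma cmap_th (K : fieldType) n (f : {ffun 'S_n -> K}) (y y' : 'S_n) :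
  th n y y' -> cmap th f y = cmap th f y'.
Proof.
move=> th_yy'; rewrite !ffunE; apply: eq_bigl => x; apply/idP/idP => /andP[-> th_x].
  exact: th_trans th_x th_yy'.
exact: th_trans th_x (th_sym th_yy').
Qed.
End CongruenceClasses.

Section BlockPerm.
Variables p q : nat.

Definition block_fun (f1 : 'I_p -> 'I_p) (f2 : 'I_q -> 'I_q) (k : 'I_(p + q)) :=
  unsplit (match split k with inl i => inl (f1 i) | inr j => inr (f2 j) end).

Lemma block_funK f1 f2 g1 g2 :
  cancel f1 g1 -> cancel f2 g2 -> cancel (block_fun f1 f2) (block_fun g1 g2).
Proof.
move=> f1K f2K k; rewrite /block_fun unsplitK -[RHS]splitK.
by case: (split k) => [i | j]; rewrite ?f1K ?f2K.
Qed.

Definition block_perm (w1 : 'S_p) (w2 : 'S_q) : 'S_(p + q) :=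
  perm (can_inj (block_funK (permK w1) (permK w2))).

Variables (w1 : 'S_p) (w2 : 'S_q).

Lemma block_permL i : block_perm w1 w2 (lshift q i) = lshift q (w1 i).
Proof. by rewrite permE /block_fun (unsplitK (inl _ i)). Qed.

Lemma block_permR j : block_perm w1 w2 (rshift p j) = rshift p (w2 j).
Proof. by rewrite permE /block_fun (unsplitK (inr _ j)). Qed.

Lemma block_perm_ltn k : (block_perm w1 w2 k < p) = (k < p).
Proof.
rewrite -(splitK k); case: (split k) => [i | j] /=.
  by rewrite block_permL /= !ltn_ord.
by rewrite block_permR /= !ltnNge !leq_addr.
Qed.

Lemma block_perm_head_values (y : 'S_(p + q)) :
  [set (block_perm w1 w2 * y)%g k | k : 'I_(p + q) & k < p] = [set y k | k : 'I_(p + q) & k < p].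
Proof.
apply/setP => c; apply/imsetP/imsetP => -[k + ->]; rewrite inE => lt_kp.
  by exists (block_perm w1 w2 k); rewrite ?permM // inE block_perm_ltn.
exists ((block_perm w1 w2)^-1 k)%g; last by rewrite permM permKV.
by rewrite inE -block_perm_ltn permKV.
Qed.
End BlockPerm.

Definition has_patterns p q (y : 'S_(p + q)) (u : 'S_p) (v : 'S_q) : bool :=
  has_pattern (fun i => val (y (lshift q i))) u && has_pattern (fun j => val (y (rshift p j))) v.

Lemma st_take_drop_oneline p q (y : 'S_(p + q)) (u : 'S_p) (v : 'S_q) :
  (st (take p (oneline y)) == oneline u) && (st (drop p (oneline y)) == oneline v) =
  has_patterns y u v.
Proof. by rewrite take_oneline drop_oneline !st_map_eq. Qed.

Lemma has_patterns_block_perm p q (w1 : 'S_p) (w2 : 'S_q) (y : 'S_(p + q)) u v :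
  has_patterns (block_perm w1 w2 * y)%g (w1 * u)%g (w2 * v)%g = has_patterns y u v.
Proof.
by congr (_ && _); apply: has_pattern_perm => k; rewrite permM ?block_permL ?block_permR.
Qed.

Section Insertional.
Variable th : forall n, rel 'S_n.
Arguments th : clear implicits.
Hypothesis th_ins : insertional th.

Lemma DeltaS_th (K : fieldType) n (f : {ffun 'S_n -> K}) p q (u u' : 'S_p) (v v' : 'S_q) :
  (forall y y', th n y y' -> f y = f y') -> th p u u' -> th q v v' ->
  DeltaS f p q (u, v) = DeltaS f p q (u', v').
Proof.
move=> f_th th_u th_v; rewrite !ffunE /=; case: eqP => // pq_n; subst n.
pose b := block_perm (u' * u^-1)%g (v' * v^-1)%g.
have fiber_b y : has_patterns (b * y)%g u' v' = has_patterns y u v.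
  by rewrite -{1}(mulgKV u u') -{1}(mulgKV v v') has_patterns_block_perm.
rewrite [RHS](reindex_inj (mulgI b)) /=.
apply: eq_big => y; first by rewrite !st_take_drop_oneline fiber_b.
move=> fiber_y; have fiber_by := fiber_y.
rewrite st_take_drop_oneline -fiber_b -st_take_drop_oneline in fiber_by.
move: fiber_y fiber_by => /andP[/eqP y_u /eqP y_v] /andP[/eqP by_u' /eqP by_v'].
pose Q := [set y k | k : 'I_(p + q) & k < p].
have card_Q : #|Q| = p by rewrite card_imset ?card_ord_lt ?leq_addr //; apply: perm_inj.
apply/f_th/(th_ins card_Q th_u th_v); do !split => //.
exact: block_perm_head_values.
Qed.
End Insertional.

Theorem theorem1p3 (K : fieldType) (th : forall n, rel 'S_n)
  (hcong : forall n, lattice_congruence (th n))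
  (hins : insertional th) :
  forall n (f : {ffun 'S_n -> K}),
    (forall x, ~~ isZ th x -> f x = 0%R) ->
    (cmap th f = 0%R -> f = 0%R) /\
    (forall p q, ctens th (DeltaZ th f p q) = DeltaS (cmap th f) p q).
Proof.
move=> n f f_supp; split.
  move=> cf0; apply/ffunP => x; rewrite ffunE.
  have [Zx | /f_supp //] := boolP (isZ th x).
  by rewrite -(cmap_isZ hcong f Zx) cf0 ffunE.
move=> p q; apply/ffunP => -[u v]; rewrite ffunE /= !(big_isZ_th hcong).
rewrite ffunE /= !(isZ_class_min hcong) /=.
apply: (DeltaS_th hins) (class_min_th hcong u) (class_min_th hcong v).
exact: cmap_th.
Qed.
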